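(* Let $\hat{\mathbb{N}}=\{n\in\mathbb{N}: n\ge 3\}$ and let $X,Y \subseteq \hat{\mathbb{N}}$ be non-empty. Then $\bigcap_{n \in X} \mathrm{pPol}\, R^{\Lambda}_n = \bigcap_{m \in Y} \mathrm{pPol}\, R^{\Lambda}_m$ if and only if $X = Y$.
   Context: Partial functions are on $\{0,1\}$: an $n$-ary partial function is a map $f:\operatorname{dom} f\to\{0,1\}$ with $\operatorname{dom} f\subseteq\{0,1\}^n$. For $\rho\subseteq\{0,1\}^h$, $\mathrm{pPol}\,\rho$ is the set of partial functions $f$ such that for every $h\times n$ matrix whose rows lie in $\operatorname{dom} f$ and whose columns lie in $\rho$, the column obtained by applying $f$ row-wise lies in $\rho$. For $m\ge3$, $R^{\Lambda}_m\subseteq\{0,1\}^{m+1}$ is the set of tuples $(x_1,\dots,x_{m+1})$ satisfying $x_1\lor\lnot x_2\lor\cdots\lor\lnot x_{m+1}$ and, for all pairwise distinct $i,j_1,j_2\in\{2,\dots,m+1\}$, $x_i\lor\lnot x_1\lor\lnot x_{j_1}\lor\lnot x_{j_2}$. *)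

From mathcomp Require Import all_boot.
Set Implicit Arguments. Unset Strict Implicit. Unset Printing Implicit Defensive.

(* An n-ary partial function on {0,1}: the domain is where it returns Some. *)
Definition pfun (n : nat) := ('I_n -> bool) -> option bool.

Definition pfunc := {n : nat & pfun n}.

Definition pPol (h : nat) (rho : ('I_h -> bool) -> Prop) (F : pfunc) : Prop :=
  let f := projT2 F in
  forall M : 'I_h -> 'I_(projT1 F) -> bool,
    (forall i, f (M i) <> None) ->
    (forall j, rho (fun i => M i j)) ->
    rho (fun i => odflt false (f (M i))).

(* R^Lambda_m subseteq {0,1}^(m+1); coordinate x_k (1-based) is x (k-1). *)
Definition RLambda (m : nat) (x : 'I_m.+1 -> bool) : Prop :=
  (x ord0 || ~~ [forall i : 'I_m.+1, (i != ord0) ==> x i]) /\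
  (forall i j1 j2 : 'I_m.+1,
      i != ord0 -> j1 != ord0 -> j2 != ord0 ->
      i != j1 -> i != j2 -> j1 != j2 ->
      x i || ~~ x ord0 || ~~ x j1 || ~~ x j2).

Definition bigcap_pPol (X : nat -> Prop) (F : pfunc) : Prop :=
  forall n, X n -> pPol (@RLambda n) F.

From mathcomp Require Import all_boot zify.
From Stdlib Require Import Classical_Prop.
Set Implicit Arguments. Unset Strict Implicit. Unset Printing Implicit Defensive.

(* For n >= 3 let f_n be the 2n-ary partial function sending A = 0^n 1^n to 0
   and each B_i = (complement of e_i, e_i) to 1.  The matrix with rows
   A, B_1, ..., B_n has its columns in R^Lambda_n, but f_n maps it to
   (0, 1, ..., 1), so f_n is not in pPol R^Lambda_n.  Now let m >= 3, m <> n,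
   and take a matrix with columns in R^Lambda_m whose rows are A or B_(s r).
   If the image broke the first clause, the first row would be A and all others
   B-rows; the left columns make s onto and the right columns make it
   injective, so m = n.  If it broke the second clause at an A-row i and
   B-rows j1, j2, with first row B_i0, the left columns force
   {i0, s j1, s j2} to be the whole index set, so n = 3 and m >= 4; the right
   column i0 then makes a further row a B-row whose value is none of i0,
   s j1, s j2.  So f_n is in
   pPol R^Lambda_m exactly for m <> n, which separates X from Y. *)


Lemma card_covering_seq (T : finType) (s : seq T) :
  (forall x, x \in s) -> #|s| = #|T|.
Proof. by move=> cov; apply: eq_card => x; rewrite cov. Qed.

Lemma exists_notin (T : finType) (s : seq T) :
  size s < #|T| -> exists x, x \notin s.
Proof.
move=> small; case: (pickP [predC s]) => [x sx | none]; first by exists x.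
have cov x : x \in s by apply: negbFE; exact: none.
by move: (card_size s); rewrite card_covering_seq // leqNgt small.
Qed.

Lemma covering_uniq (T : finType) (s : seq T) :
  (forall x, x \in s) -> size s <= #|T| -> size s = #|T| /\ uniq s.
Proof.
move=> cov small; have cardE := card_covering_seq cov.
have sizeE : size s = #|T| by apply/eqP; rewrite eqn_leq small -cardE card_size.
by split=> //; apply/card_uniqP; rewrite cardE.
Qed.

Lemma exists_neq n (i : 'I_n) : 1 < n -> exists k : 'I_n, k != i.
Proof.
move=> n2; have [|k] := @exists_notin _ [:: i]; first by rewrite card_ord.
by rewrite inE; exists k.
Qed.

Lemma RLambda_head m (x : 'I_m.+1 -> bool) :
  RLambda x -> ~~ x ord0 -> exists2 r, r != ord0 & ~~ x r.
Proof.
case=> + _ x0; rewrite (negbTE x0) /= negb_forall => /existsP [r].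
by rewrite negb_imply => /andP [r0 xr]; exists r.
Qed.

Lemma RLambda_triple m (x : 'I_m.+1 -> bool) (i j1 j2 : 'I_m.+1) :
  RLambda x -> i != ord0 -> j1 != ord0 -> j2 != ord0 ->
  i != j1 -> i != j2 -> j1 != j2 -> x ord0 -> x j1 -> x j2 -> x i.
Proof.
case=> _ tri i0 j10 j20 ij1 ij2 j12 x0 x1 x2.
by move: (tri i j1 j2 i0 j10 j20 ij1 ij2 j12); rewrite x0 x1 x2 !orbF.
Qed.

Lemma RLambdaI m (x : 'I_m.+1 -> bool) :
  (~~ x ord0 -> exists2 r, r != ord0 & ~~ x r) ->
  (forall i j1 j2 : 'I_m.+1, i != ord0 -> j1 != ord0 -> j2 != ord0 ->
     i != j1 -> i != j2 -> j1 != j2 -> x ord0 -> x j1 -> x j2 -> x i) ->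
  RLambda x.
Proof.
move=> head tri; split.
  case: (boolP (x ord0)) => //= /head [r r0 xr]; rewrite negb_forall.
  by apply/existsP; exists r; rewrite negb_imply r0.
move=> i j1 j2 i0 j10 j20 ij1 ij2 j12.
case x0: (x ord0); case x1: (x j1); case x2: (x j2); rewrite /= ?orbT ?orbF //.
by rewrite (tri i j1 j2).
Qed.

Lemma eq_RLambda m (x y : 'I_m.+1 -> bool) : x =1 y -> RLambda x -> RLambda y.
Proof.
move=> E Rx; apply: RLambdaI => [|i j1 j2 i0 j10 j20 ij1 ij2 j12]; rewrite -!E.
  by move/(RLambda_head Rx) => [r r0 xr]; exists r; rewrite -?E.
exact: (RLambda_triple Rx i0 j10 j20 ij1 ij2 j12).
Qed.

(* [code_row None] is the row A and [code_row (Some i)] the row B_i. *)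
Definition code_row n (o : option 'I_n) (j : 'I_(n + n)) : bool :=
  match split j, o with
  | inl k, Some i => k != i
  | inl _, None => false
  | inr k, Some i => k == i
  | inr _, None => true
  end.

Lemma code_row_lshift n (o : option 'I_n) (k : 'I_n) :
  code_row o (lshift n k) = if o is Some i then k != i else false.
Proof. by rewrite /code_row (unsplitK (inl k)). Qed.

Lemma code_row_rshift n (o : option 'I_n) (k : 'I_n) :
  code_row o (rshift n k) = if o is Some i then k == i else true.
Proof. by rewrite /code_row (unsplitK (inr k)). Qed.

Lemma eq_code_row n (o o' : option 'I_n) :
  1 < n -> code_row o =1 code_row o' -> o = o'.
Proof.
move=> n2 E; case: o o' E => [i|] [i'|] E //.
- by move: (E (rshift n i)); rewrite !code_row_rshift eqxx => /esym/eqP ->.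
- by have [k ki] := exists_neq i n2; move: (E (lshift n k)); rewrite !code_row_lshift ki.
- by have [k ki] := exists_neq i' n2; move: (E (lshift n k)); rewrite !code_row_lshift ki.
Qed.

Section CodedMatrix.

Variables (m n : nat) (s : 'I_m.+1 -> option 'I_n).
Hypothesis n_ge3 : 3 <= n.
Hypothesis cols : forall j, RLambda (fun r => code_row (s r) j).

Lemma coded_rows_card :
  s ord0 = None -> (forall r, r != ord0 -> s r) -> m = n.
Proof.
move=> s0 rowsB; pose t (r : 'I_m) := s (lift ord0 r).
have lift0 (r : 'I_m) : lift ord0 r != ord0 by rewrite eq_sym neq_lift.
have hit k : exists2 r, r != ord0 & s r = Some k.
  have [|r r0] := RLambda_head (cols (lshift n k)); first by rewrite s0 code_row_lshift.
  have := rowsB r r0; rewrite code_row_lshift.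
  by case sr: (s r) => // [i] _ /negPn/eqP ki; exists r; rewrite ?sr ?ki.
have t_inj : injective t.
  move=> r1 r2 t12; apply/eqP/negPn/negP => r12.
  have [k t1] : exists k, t r1 = Some k.
    by move: (rowsB _ (lift0 r1)); rewrite -/(t r1); case: (t r1) => // k; exists k.
  have [k' k'k] := exists_neq k (ltnW n_ge3); have [r r0 sr] := hit k'.
  have r_other r' : t r' = Some k -> r != lift ord0 r'.
    by move=> tr'; apply: contraNneq k'k => er; move: sr; rewrite er -/(t r') tr' => -[->].
  have := RLambda_triple (cols (rshift n k)) r0 (lift0 r1) (lift0 r2)
    (r_other r1 t1) (r_other r2 (etrans (esym t12) t1)).
  rewrite (inj_eq (@lift_inj _ ord0)) r12 !code_row_rshift s0 sr -/(t r1) -/(t r2) -t12 t1.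
  by rewrite eqxx (eq_sym k) (negbTE k'k) => /(_ isT isT isT isT).
have codomE : codom t =i predC1 None.
  case=> [k|]; rewrite !inE /=; apply/codomP.
    have [r r0 sr] := hit k; case: (unliftP ord0 r) r0 sr => [r' -> _ <-|-> /eqP //].
    by exists r'.
  by case=> r tr; move: (rowsB _ (lift0 r)); rewrite -/(t r) -tr.
by have := card_codom t_inj; rewrite (eq_card codomE) cardC1 card_option !card_ord.
Qed.

Lemma coded_pair_cover i0 i q1 q2 b1 b2 :
  s ord0 = Some i0 -> s i = None ->
  i != ord0 -> q1 != ord0 -> q2 != ord0 -> i != q1 -> i != q2 -> q1 != q2 ->
  s q1 = Some b1 -> s q2 = Some b2 -> forall k, k \in [:: i0; b1; b2].
Proof.
move=> s0 si i_nz q1_nz q2_nz iq1 iq2 q12 s1 s2 k.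
apply/contraT; rewrite !inE !negb_or => /and3P [k0 k1 k2].
have := RLambda_triple (cols (lshift n k)) i_nz q1_nz q2_nz iq1 iq2 q12.
by rewrite !code_row_lshift s0 si s1 s2 k0 k1 k2 => /(_ isT isT isT).
Qed.

Lemma coded_triple (i j1 j2 : 'I_m.+1) : 3 < n \/ 3 < m ->
  i != ord0 -> j1 != ord0 -> j2 != ord0 -> i != j1 -> i != j2 -> j1 != j2 ->
  s ord0 -> s j1 -> s j2 -> s i.
Proof.
move=> big i_nz j1_nz j2_nz ij1 ij2 j12.
case s0: (s ord0) => [i0|] //; case e1: (s j1) => [a1|] //.
case e2: (s j2) => [a2|] // _ _ _; case si: (s i) => //.
have pair_uniq q1 q2 b1 b2 : q1 != ord0 -> q2 != ord0 ->
    i != q1 -> i != q2 -> q1 != q2 -> s q1 = Some b1 -> s q2 = Some b2 ->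
    n = 3 /\ uniq [:: i0; b1; b2].
  move=> q1_nz q2_nz iq1 iq2 q12 s1 s2.
  have [] := covering_uniq (coded_pair_cover s0 si i_nz q1_nz q2_nz iq1 iq2 q12 s1 s2).
    by rewrite card_ord.
  by rewrite card_ord.
have [n3 u12] := pair_uniq j1 j2 a1 a2 j1_nz j2_nz ij1 ij2 j12 e1 e2.
move: u12; rewrite /= !inE negb_or andbT => /andP [/andP [i0a1 _] _].
have m4 : 3 < m by case: big; rewrite ?n3.
have [|r] := @exists_notin _ [:: ord0; i; j1; j2]; first by rewrite card_ord.
rewrite !inE !negb_or => /and4P [r_nz ri rj1 rj2].
have [ir ji j1r] : [/\ i != r, j1 != i & j1 != r] by split; rewrite eq_sym.
have [b sr i0b] : exists2 b, s r = Some b & i0 != b.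
  have := RLambda_triple (cols (rshift n i0)) j1_nz i_nz r_nz ji j1r ir.
  rewrite !code_row_rshift s0 si e1 eqxx (negbTE i0a1) => /(_ isT isT).
  by case: (s r) => [b nb|/(_ isT)//]; exists b => //; apply/negP => /nb.
have [_] := pair_uniq r j1 b a1 r_nz j1_nz ir ij1 rj1 sr e1.
have [_] := pair_uniq r j2 b a2 r_nz j2_nz ir ij2 rj2 sr e2.
have := coded_pair_cover s0 si i_nz j1_nz j2_nz ij1 ij2 j12 e1 e2 b.
rewrite /= !inE (eq_sym b i0) (negbTE i0b) /=.
by case/orP=> /eqP -> /and3P [_ ba2 _] /and3P [_ ba1 _]; rewrite eqxx in ba1 ba2.
Qed.

Lemma RLambda_coded_image : 3 <= m -> m != n -> RLambda (fun r => isSome (s r)).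
Proof.
move=> m3 mn; apply: RLambdaI => [s0 | i j1 j2]; last by apply: coded_triple; lia.
case: (pickP [pred r | (r != ord0) && ~~ s r]) => [r /andP [r_nz sr] | rowsB].
  by exists r.
case/eqP: mn; apply: coded_rows_card => [|r r_nz]; first by case: (s ord0) s0.
by move: (rowsB r); rewrite /= r_nz => /negbFE.
Qed.

End CodedMatrix.

Definition decode n (x : 'I_(n + n) -> bool) : option (option 'I_n) :=
  [pick o | [forall j, x j == code_row o j]].

Definition separator n : pfunc :=
  existT _ (n + n) (fun x => omap isSome (@decode n x)).

Lemma decodeP n (x : 'I_(n + n) -> bool) o : decode x = Some o -> x =1 code_row o.
Proof. by rewrite /decode; case: pickP => // o' /forallP xE [<-] j; apply/eqP. Qed.

Lemma decode_code_row n (o : option 'I_n) : 1 < n -> decode (code_row o) = Some o.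
Proof.
move=> n2; rewrite /decode; case: pickP => [o' /forallP E | /(_ o) /negbT /forallPn [j]].
  by congr Some; apply: eq_code_row => // j; apply/esym/eqP.
by rewrite eqxx.
Qed.

Lemma separator_preserves m n :
  3 <= m -> 3 <= n -> m != n -> pPol (@RLambda m) (separator n).
Proof.
move=> m3 n3 mn; rewrite /pPol /= => M dom cols.
pose s r := odflt None (decode (M r)).
have Ms r : decode (M r) = Some (s r) by move: (dom r); rewrite /s; case: decode.
apply: eq_RLambda (RLambda_coded_image n3 _ m3 mn) => [r | j]; first by rewrite Ms.
by apply: eq_RLambda (cols j) => r; apply: decodeP.
Qed.

Lemma separator_not_preserves n : 3 <= n -> ~ pPol (@RLambda n) (separator n).
Proof.
move=> n3 pres; have n2 : 1 < n by apply: ltnW.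
pose M (r : 'I_n.+1) := code_row (unlift ord0 r).
have fM r : omap isSome (decode (M r)) = Some (r != ord0).
  by rewrite decode_code_row //=; case: (unliftP ord0 r) => [k ->|->];
    rewrite ?eqxx // eq_sym neq_lift.
have cols j : RLambda (M^~ j).
  case: (split j) (splitK j) => k <- /=; apply: RLambdaI.
  - move=> _; exists (lift ord0 k); first by rewrite eq_sym neq_lift.
    by rewrite /M liftK code_row_lshift eqxx.
  - by move=> i j1 j2 _ _ _ _ _ _; rewrite /M unlift_none code_row_lshift.
  - by rewrite /M unlift_none code_row_rshift.
  move=> i j1 j2 _ j1_nz j2_nz _ _ j12 _.
  case: (unliftP ord0 j1) j1_nz j12 => [k1 -> _|->]; last by rewrite eqxx.
  case: (unliftP ord0 j2) j2_nz => [k2 -> _|->]; last by rewrite eqxx.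
  rewrite /M !liftK !code_row_rshift (inj_eq (@lift_inj _ ord0)).
  by move=> k12 /eqP k1E /eqP k2E; rewrite -k1E -k2E eqxx in k12.
have dom r : omap isSome (decode (M r)) <> None by rewrite fM.
have /RLambda_head := pres M dom cols.
by rewrite /= fM eqxx => /(_ isT) [r r_nz]; rewrite fM r_nz.
Qed.

Lemma bigcap_pPol_subset (X Y : nat -> Prop) :
  (forall n, X n -> 3 <= n) -> (forall n, Y n -> 3 <= n) ->
  (forall F, bigcap_pPol Y F -> bigcap_pPol X F) -> forall n, X n -> Y n.
Proof.
move=> X3 Y3 YX n Xn; apply: NNPP => Yn; have n3 := X3 n Xn.
apply: (separator_not_preserves n3); apply: YX Xn => m Ym.
apply: separator_preserves; [exact: Y3 Ym | exact: n3 | apply/eqP => mn].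
by apply: Yn; rewrite -mn.
Qed.

Theorem mainTheorem20 (X Y : nat -> Prop) :
  (forall n, X n -> 3 <= n) -> (forall n, Y n -> 3 <= n) ->
  (exists n, X n) -> (exists n, Y n) ->
  ((forall F : pfunc, bigcap_pPol X F <-> bigcap_pPol Y F) <->
   (forall n, X n <-> Y n)).
Proof.
move=> X3 Y3 _ _; split=> [E n | E F].
  by split; apply: bigcap_pPol_subset => // F /E.
by split=> H n /E; apply: H.
Qed.
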